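(* Let $N\ge3$ be odd, $l\in\{0,1\}$, and let $r\ge1$ be an integer with $r+l$ odd. Let $q$ be an integer with $0\le q\le (N-1)/2$, and set $h=2\pi/N$ and $\sigma_k(r)=[\sin(hk/2)/k]^{1+r}$. Define $C_k^{(l)}(r,N,j,t)$ and $H_k^{(l)}(r,N)$ as $$C_k^{(l)}(r,N,j,t)=\sigma_k(r)\cos k(t-t_j^{(l)})+\sum_{m=1}^{\infty}(-1)^{ml}\Bigl[\sigma_{mN+k}(r)\cos(mN+k)(t-t_j^{(l)})+\sigma_{mN-k}(r)\cos(mN-k)(t-t_j^{(l)})\Bigr],$$ $$H_k^{(l)}(r,N)=\sigma_k(r)+\sum_{m=1}^{\infty}(-1)^{ml}\bigl[\sigma_{mN+k}(r)+\sigma_{mN-k}(r)\bigr].$$ Define the fundamental trigonometric LS splines $$ts_{j,q}^{(l)}(r,t)=\frac1N\Bigl\{1+2\sum_{k=1}^{q}\frac{C_k^{(l)}(r,N,j,t)}{H_k^{(l)}(r,N)}\Bigr\},\qquad j=1,\dots,N,$$ and the fundamental trigonometric LS polynomials $$\varphi_{j,q}^{(l)}(t)=\frac1N\Bigl[1+2\sum_{k=1}^q\cos k(t-t_j^{(l)})\Bigr].$$ Then the following hold. 1. For all $i,j\in\{1,\dots,N\}$, $ts_{j,q}^{(l)}(r,t_i^{(l)})=\varphi_{j,q}^{(l)}(t_i^{(l)})$. 2. For any data $f_1,\dots,f_N$, the LS spline $Ts_{r,q}^{(l)}(t)=\sum_{j=1}^N f_j\,ts_{j,q}^{(l)}(r,t)$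 takes at each node $t_i^{(l)}$ the same value as the discrete least-squares trigonometric polynomial $T_q^{(l)}(t)=\sum_{j=1}^N f_j\varphi_{j,q}^{(l)}(t)$.
   Context: Uniform grids on $[0,2\pi]$: for $N$ odd and $j=1,\dots,N$, set $t_j^{(0)}=\frac{2\pi}{N}(j-1)$ and $t_j^{(1)}=\frac{\pi}{N}(2j-1)$. Under the hypothesis that $r+l$ is odd, all constants $H_k^{(l)}(r,N)$ are nonzero, so the definition of $ts_{j,q}^{(l)}$ makes sense. The polynomial $T_q^{(l)}$ coincides with the order-$q$ partial sum $\frac{a_0}{2}+\sum_{k=1}^q(a_k\cos kt+b_k\sin kt)$ of the discrete Fourier series, with coefficients $a_0=\frac2N\sum_j f_j$, $a_k=\frac2N\sum_j f_j\cos kt_j^{(l)}$, and $b_k=\frac2N\sum_j f_j\sin kt_j^{(l)}$. *)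

From Stdlib Require Import Reals Lra Lia ClassicalEpsilon.
Open Scope R_scope.

Fixpoint sumR (n : nat) (f : nat -> R) : R :=
  match n with
  | O => 0
  | S n' => sumR n' f + f (S n')
  end.

(* The sum of the series sum_{m>=1} u m (value chosen by classical epsilon
   among the limits; it is the true sum whenever the series converges). *)
Definition series1 (u : nat -> R) : R :=
  epsilon (inhabits 0) (fun s => infinite_sum (fun n => u (S n)) s).

Definition hstep (N : nat) : R := 2 * PI / INR N.

Definition node (l N j : nat) : R :=
  if Nat.eqb l 0 then 2 * PI / INR N * (INR j - 1)
  else PI / INR N * (2 * INR j - 1).

Definition sigma (N r k : nat) : R :=
  (sin (hstep N * INR k / 2) / INR k) ^ (1 + r).

Definition Ck (l r N j k : nat) (t : R) : R :=
  sigma N r k * cos (INR k * (t - node l N j)) +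
  series1 (fun m =>
    (-1) ^ (m * l) *
    (sigma N r (m * N + k) * cos (INR (m * N + k) * (t - node l N j)) +
     sigma N r (m * N - k) * cos (INR (m * N - k) * (t - node l N j)))).

Definition Hk (l r N k : nat) : R :=
  sigma N r k +
  series1 (fun m =>
    (-1) ^ (m * l) * (sigma N r (m * N + k) + sigma N r (m * N - k))).

Definition ts (l r N q j : nat) (t : R) : R :=
  / INR N * (1 + 2 * sumR q (fun k => Ck l r N j k t / Hk l r N k)).

Definition phi (l N q j : nat) (t : R) : R :=
  / INR N * (1 + 2 * sumR q (fun k => cos (INR k * (t - node l N j)))).

Definition Ts (l r N q : nat) (f : nat -> R) (t : R) : R :=
  sumR N (fun j => f j * ts l r N q j t).

Definition Tq (l N q : nat) (f : nat -> R) (t : R) : R :=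
  sumR N (fun j => f j * phi l N q j t).

(* At a node t_i the difference t_i - t_j is a multiple of 2 pi / N, so every
   frequency m N +- k occurring in C_k aliases to k there, and
   C_k(t_i) = cos k (t_i - t_j) * H_k.  Hence ts and phi agree at the nodes as
   soon as H_k <> 0 for 1 <= k <= q.  With s = sin (pi k / N) > 0 and p = 1 + r,
   the parity of r + l absorbs the signs (-1)^(m l), and H_k becomes the sum of
   (s / (m N + k))^p + (-1)^p (s / (m N - k))^p.  For p even every term is
   nonnegative; for p odd each negative term (s / ((m+1) N - k))^p is dominated
   by the positive one (s / (m N + k))^p because 2 k < N, so H_k exceeds
   (s / k)^p - (s / (N - k))^p > 0. *)
From Pilot Require Import Defs.
From Stdlib Require Import Reals Lra Lia ClassicalEpsilon FunctionalExtensionality.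
From Coquelicot Require Import Coquelicot.
(* Coquelicot re-exports Stdlib's [Rsigma.sigma], which would shadow [Defs.sigma]. *)
Import Pilot.Defs.
Open Scope R_scope.

Lemma sumR_ext n f g :
  (forall k, (1 <= k <= n)%nat -> f k = g k) -> sumR n f = sumR n g.
Proof.
  induction n as [|n IH]; intros Hfg; simpl; [reflexivity|].
  rewrite IH by (intros k Hk; apply Hfg; lia).
  rewrite Hfg by lia. reflexivity.
Qed.

Lemma series1_ext u v : (forall n, u (S n) = v (S n)) -> series1 u = series1 v.
Proof.
  intros Huv. unfold series1.
  replace (fun n => v (S n)) with (fun n => u (S n)) by
    (apply functional_extensionality; auto).
  reflexivity.
Qed.

Lemma series1_Series u :
  ex_series (fun n => u (S n)) -> series1 u = Series (fun n => u (S n)).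
Proof.
  intros Hu. pose proof (Series_correct _ Hu) as Hsum.
  apply is_series_Reals in Hsum.
  apply (uniqueness_sum (fun n => u (S n))); [|exact Hsum].
  unfold series1. apply epsilon_spec. eauto.
Qed.

Lemma infinite_sum_series1 u :
  ex_series (fun n => u (S n)) -> infinite_sum (fun n => u (S n)) (series1 u).
Proof.
  intros Hu. rewrite series1_Series by exact Hu.
  apply is_series_Reals, Series_correct, Hu.
Qed.

Lemma series1_scal_l c u :
  ex_series (fun n => u (S n)) -> series1 (fun m => c * u m) = c * series1 u.
Proof.
  intros Hu. rewrite !series1_Series.
  - apply Series_scal_l.
  - exact Hu.
  - exact (@ex_series_scal_l R_AbsRing R_NormedModule c _ Hu).
Qed.

Lemma infinite_sum_ge (u : nat -> R) a l :
  (forall M, a <= sum_f_R0 u M) -> infinite_sum u l -> a <= l.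
Proof.
  intros Ha Hl. apply (Rle_cv_lim (Un := fun _ => a) (Vn := sum_f_R0 u)); auto.
  intros eps Heps. exists 0%nat. intros n _.
  unfold Rdist. rewrite Rminus_diag, Rabs_R0. exact Heps.
Qed.

Lemma sum_f_R0_telescoping_ge (c b : nat -> R) :
  (forall n, 0 <= c n) -> (forall n, b (S n) <= c n) ->
  forall M, - b 0%nat <= sum_f_R0 (fun n => c n - b n) M.
Proof.
  intros Hc Hbc M.
  assert (Hpart : - b 0%nat + c M <= sum_f_R0 (fun n => c n - b n) M).
  { induction M as [|M IH]; simpl; [lra|].
    pose proof (Hbc M). lra. }
  pose proof (Hc M). lra.
Qed.

Lemma partial_sum_inv_sq_le M :
  sum_f_R0 (fun n => / INR (S n) ^ 2) M <= 2 - / INR (S M).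
Proof.
  induction M as [|M IH].
  - simpl. rewrite !Rmult_1_r, Rinv_1. lra.
  - rewrite tech5, (S_INR (S M)).
    assert (Hx : 0 < INR (S M)) by (apply lt_0_INR; lia).
    set (x := INR (S M)) in *.
    assert (/ (x + 1) ^ 2 <= / x - / (x + 1)).
    { replace (/ x - / (x + 1)) with (/ (x * (x + 1))) by (field; lra).
      apply Rinv_le_contravar; nra. }
    lra.
Qed.

Lemma ex_series_inv_sq : ex_series (fun n => / INR (S n) ^ 2).
Proof.
  apply ex_series_Reals_1, growing_cv.
  - intros n. cbv beta. rewrite tech5.
    assert (0 < / INR (S (S n)) ^ 2) by (apply Rinv_0_lt_compat, pow_lt, lt_0_INR; lia).
    lra.
  - exists 2. intros x [M ->].
    pose proof (partial_sum_inv_sq_le M).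
    pose proof (Rinv_0_lt_compat _ (lt_0_INR _ (Nat.lt_0_succ M))). lra.
Qed.

Lemma Rabs_pow_le_inv_sq x K p :
  (1 <= K)%nat -> (2 <= p)%nat -> Rabs x <= / INR K -> Rabs (x ^ p) <= / INR K ^ 2.
Proof.
  intros HK Hp Hx. rewrite <- RPow_abs.
  assert (HK1 : / INR K <= 1).
  { rewrite <- Rinv_1. apply Rinv_le_contravar; [lra|]. apply (le_INR 1); lia. }
  pose proof (Rabs_pos x) as Hx0.
  replace p with (2 + (p - 2))%nat by lia. rewrite pow_add.
  assert (Rabs x ^ (p - 2) <= 1) by (rewrite <- (pow1 (p - 2)); apply pow_incr; lra).
  assert (0 <= Rabs x ^ (p - 2)) by (apply pow_le; lra).
  assert (Rabs x ^ 2 <= (/ INR K) ^ 2) by (apply pow_incr; lra).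
  rewrite pow_inv in *.
  assert (0 <= Rabs x ^ 2) by (apply pow_le; lra).
  nra.
Qed.

Lemma pow_lt_pow_l x y p : 0 <= x < y -> (1 <= p)%nat -> x ^ p < y ^ p.
Proof.
  intros Hxy Hp. induction p as [|p IH]; [lia|].
  destruct p as [|p]; [simpl; lra|].
  simpl in *. assert (x * x ^ p < y * y ^ p) by (apply IH; lia).
  assert (0 <= x * x ^ p) by (apply Rmult_le_pos; [lra|apply pow_le; lra]). nra.
Qed.

Lemma pow_even_nonneg x p : Nat.Even p -> 0 <= x ^ p.
Proof.
  intros [a ->]. rewrite pow_sqr. apply pow_le, Rle_0_sqr.
Qed.

Lemma sign_pow_cancel m l p x :
  Nat.Even (l + p) -> (-1) ^ (m * l) * ((-1) ^ m * x) ^ p = x ^ p.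
Proof.
  intros [a Ha].
  rewrite Rpow_mult_distr, <- pow_mult, <- Rmult_assoc, <- pow_add.
  replace (m * l + m * p)%nat with (2 * (m * a))%nat by nia.
  rewrite pow_1_even. ring.
Qed.

Lemma sin_add_INR_mult_PI x m : sin (x + INR m * PI) = (-1) ^ m * sin x.
Proof.
  induction m as [|m IH].
  - simpl. rewrite Rmult_0_l, Rplus_0_r. ring.
  - rewrite S_INR.
    replace (x + (INR m + 1) * PI) with (x + INR m * PI + PI) by ring.
    rewrite neg_sin, IH. simpl. ring.
Qed.

Lemma cos_add_2PI_diff x a b : cos (x + 2 * INR a * PI - 2 * INR b * PI) = cos x.
Proof.
  rewrite <- (cos_period _ b).
  replace (x + 2 * INR a * PI - 2 * INR b * PI + 2 * INR b * PI)
    with (x + 2 * INR a * PI) by ring.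
  apply cos_period.
Qed.

Lemma inv_INR_sq_le a b : (1 <= a <= b)%nat -> / INR b ^ 2 <= / INR a ^ 2.
Proof.
  intros Hab. apply Rinv_le_contravar.
  - apply pow_lt, lt_0_INR. lia.
  - apply pow_incr. split; [apply pos_INR|apply le_INR; lia].
Qed.

Lemma sigma_abs_le N r K :
  (1 <= r)%nat -> (1 <= K)%nat -> Rabs (sigma N r K) <= / INR K ^ 2.
Proof.
  intros Hr HK. apply Rabs_pow_le_inv_sq; [lia|lia|].
  assert (HK0 : 0 < INR K) by (apply lt_0_INR; lia).
  unfold Rdiv. rewrite Rabs_mult, Rabs_inv, (Rabs_pos_eq (INR K)) by lra.
  rewrite <- (Rmult_1_l (/ INR K)) at 2.
  apply Rmult_le_compat_r; [apply Rlt_le, Rinv_0_lt_compat, HK0|].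
  apply Rabs_le, SIN_bound.
Qed.

Definition Hk_term (l r N k m : nat) : R :=
  (-1) ^ (m * l) * (sigma N r (m * N + k) + sigma N r (m * N - k)).

Lemma ex_series_Hk_term l r N k :
  (1 <= r)%nat -> (k < N)%nat -> ex_series (fun n => Hk_term l r N k (S n)).
Proof.
  intros Hr HkN.
  apply (ex_series_le (K := R_AbsRing) (V := R_CompleteNormedModule) _
           (fun n => 2 * / INR (S n) ^ 2)).
  - intros n. change (Rabs (Hk_term l r N k (S n)) <= 2 * / INR (S n) ^ 2).
    unfold Hk_term. rewrite Rabs_mult, pow_1_abs, Rmult_1_l.
    eapply Rle_trans; [apply Rabs_triang|].
    pose proof (sigma_abs_le N r (S n * N + k) Hr ltac:(nia)).
    pose proof (sigma_abs_le N r (S n * N - k) Hr ltac:(nia)).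
    pose proof (inv_INR_sq_le (S n) (S n * N + k) ltac:(nia)).
    pose proof (inv_INR_sq_le (S n) (S n * N - k) ltac:(nia)).
    lra.
  - exact (@ex_series_scal_l R_AbsRing R_NormedModule 2 _ ex_series_inv_sq).
Qed.

Lemma sigma_eq N r K :
  (1 <= N)%nat -> sigma N r K = (sin (PI * INR K / INR N) / INR K) ^ (1 + r).
Proof.
  intros HN. assert (0 < INR N) by (apply lt_0_INR; lia).
  unfold sigma, hstep. do 3 f_equal. field. lra.
Qed.

Lemma sigma_add_mult N r k m : (1 <= N)%nat ->
  sigma N r (m * N + k) =
  ((-1) ^ m * (sin (PI * INR k / INR N) / INR (m * N + k))) ^ (1 + r).
Proof.
  intros HN. assert (0 < INR N) by (apply lt_0_INR; lia).
  rewrite sigma_eq by exact HN. f_equal.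
  replace (PI * INR (m * N + k) / INR N) with (PI * INR k / INR N + INR m * PI)
    by (rewrite plus_INR, mult_INR; field; lra).
  rewrite sin_add_INR_mult_PI. unfold Rdiv. ring.
Qed.

Lemma sigma_sub_mult N r k m : (1 <= N)%nat -> (k <= m * N)%nat ->
  sigma N r (m * N - k) =
  ((-1) ^ m * - (sin (PI * INR k / INR N) / INR (m * N - k))) ^ (1 + r).
Proof.
  intros HN Hk. assert (0 < INR N) by (apply lt_0_INR; lia).
  rewrite sigma_eq by exact HN. f_equal.
  replace (PI * INR (m * N - k) / INR N) with (- (PI * INR k / INR N) + INR m * PI)
    by (rewrite minus_INR, mult_INR by exact Hk; field; lra).
  rewrite sin_add_INR_mult_PI, sin_neg. unfold Rdiv. ring.
Qed.

Lemma Hk_term_eq l r N k m :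
  (1 <= N)%nat -> (k <= m * N)%nat -> Nat.Even (l + (1 + r)) ->
  Hk_term l r N k m =
  (sin (PI * INR k / INR N) / INR (m * N + k)) ^ (1 + r) +
  (-1) ^ (1 + r) * (sin (PI * INR k / INR N) / INR (m * N - k)) ^ (1 + r).
Proof.
  intros HN Hk Hev. unfold Hk_term.
  rewrite sigma_add_mult, sigma_sub_mult by assumption.
  rewrite Rmult_plus_distr_l, !sign_pow_cancel by exact Hev.
  rewrite <- Rpow_mult_distr. f_equal. f_equal. ring.
Qed.

Lemma node_sub l N i j : (1 <= N)%nat ->
  node l N i - node l N j = 2 * PI / INR N * (INR i - INR j).
Proof.
  intros HN. assert (0 < INR N) by (apply lt_0_INR; lia).
  unfold node. destruct (Nat.eqb l 0); field; lra.
Qed.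

Lemma cos_node_alias_add l N i j m k : (1 <= N)%nat ->
  cos (INR (m * N + k) * (node l N i - node l N j)) =
  cos (INR k * (node l N i - node l N j)).
Proof.
  intros HN. assert (0 < INR N) by (apply lt_0_INR; lia).
  rewrite node_sub by exact HN.
  rewrite <- (cos_add_2PI_diff (INR k * _) (m * i) (m * j)). f_equal.
  rewrite plus_INR, !mult_INR. field. lra.
Qed.

Lemma cos_node_alias_sub l N i j m k : (1 <= N)%nat -> (k <= m * N)%nat ->
  cos (INR (m * N - k) * (node l N i - node l N j)) =
  cos (INR k * (node l N i - node l N j)).
Proof.
  intros HN Hk. assert (0 < INR N) by (apply lt_0_INR; lia).
  rewrite node_sub by exact HN.
  rewrite <- (cos_neg (INR k * _)), <- (cos_add_2PI_diff (- _) (m * i) (m * j)).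
  f_equal.
  rewrite minus_INR, !mult_INR by exact Hk. field. lra.
Qed.

Lemma Ck_node l r N i j k : (1 <= N)%nat -> (1 <= r)%nat -> (k < N)%nat ->
  Ck l r N j k (node l N i) = cos (INR k * (node l N i - node l N j)) * Hk l r N k.
Proof.
  intros HN Hr HkN.
  change (Hk l r N k) with (sigma N r k + series1 (Hk_term l r N k)).
  unfold Ck.
  rewrite (series1_ext _ (fun m => cos (INR k * (node l N i - node l N j)) *
                                   Hk_term l r N k m)).
  - rewrite series1_scal_l by (apply ex_series_Hk_term; assumption). ring.
  - intros n. unfold Hk_term.
    rewrite cos_node_alias_add, cos_node_alias_sub by nia. ring.
Qed.

Section Hk_positive.

Variables N r k : nat.
Hypothesis HN : (1 <= N)%nat.
Hypothesis Hr : (1 <= r)%nat.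
Hypothesis Hk1 : (1 <= k)%nat.
Hypothesis HkN : (2 * k < N)%nat.

Let s := sin (PI * INR k / INR N).

Lemma sin_node_freq_pos : 0 < s.
Proof.
  assert (HNR : 0 < INR N) by (apply lt_0_INR; lia).
  assert (HkR : INR k < INR N) by (apply lt_INR; lia).
  assert (0 < INR k) by (apply lt_0_INR; lia).
  pose proof PI_RGT_0.
  apply sin_gt_0.
  - apply Rdiv_lt_0_compat; nra.
  - apply (Rmult_lt_reg_r (INR N)); [exact HNR|].
    unfold Rdiv. rewrite Rmult_assoc, Rinv_l, Rmult_1_r by lra. nra.
Qed.

Lemma sigma_k_pos : 0 < sigma N r k.
Proof.
  rewrite sigma_eq by exact HN. fold s. apply pow_lt, Rdiv_lt_0_compat.
  - exact sin_node_freq_pos.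
  - apply lt_0_INR. lia.
Qed.

Lemma Hk_pos_even : Nat.Even (1 + r) -> 0 < Hk 0 r N k.
Proof.
  intros Hev. change (0 < sigma N r k + series1 (Hk_term 0 r N k)).
  assert (Hterm : forall n, 0 <= Hk_term 0 r N k (S n)).
  { intros n. unfold Hk_term, sigma. rewrite Nat.mul_0_r, pow_O, Rmult_1_l.
    apply Rplus_le_le_0_compat; apply pow_even_nonneg, Hev. }
  assert (0 <= series1 (Hk_term 0 r N k)).
  { apply (infinite_sum_ge (fun n => Hk_term 0 r N k (S n))).
    - intros M. apply cond_pos_sum, Hterm.
    - apply infinite_sum_series1, ex_series_Hk_term; lia. }
  pose proof sigma_k_pos. lra.
Qed.

Lemma Hk_pos_odd : Nat.Odd (1 + r) -> 0 < Hk 1 r N k.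
Proof.
  intros [a Ha].
  assert (Hs := sin_node_freq_pos).
  set (c := fun m => (s / INR (m * N + k)) ^ (1 + r)).
  set (b := fun m => (s / INR (m * N - k)) ^ (1 + r)).
  assert (Hterm : forall n, Hk_term 1 r N k (S n) = c (S n) - b (S n)).
  { intros n. rewrite Hk_term_eq by first [nia | exists (a + 1)%nat; lia].
    replace ((-1) ^ (1 + r)) with (-1) by (rewrite Ha, Nat.add_1_r, pow_1_odd; reflexivity).
    unfold c, b. fold s. ring. }
  assert (Hc : forall n, 0 <= c n).
  { intros n. apply pow_le, Rlt_le, Rdiv_lt_0_compat; [exact Hs|].
    apply lt_0_INR. lia. }
  assert (Hbc : forall n, b (S n) <= c n).
  { intros n. apply pow_incr. split.
    - apply Rlt_le, Rdiv_lt_0_compat; [exact Hs|]. apply lt_0_INR. nia.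
    - unfold Rdiv. apply Rmult_le_compat_l; [lra|].
      apply Rinv_le_contravar; [apply lt_0_INR; lia|apply le_INR; nia]. }
  assert (Hseries : - b 1%nat <= series1 (Hk_term 1 r N k)).
  { apply (infinite_sum_ge (fun n => Hk_term 1 r N k (S n))).
    - intros M. rewrite (sum_eq _ (fun n => c (S n) - b (S n))) by auto.
      apply (sum_f_R0_telescoping_ge (fun n => c (S n)) (fun n => b (S n))); auto.
    - apply infinite_sum_series1, ex_series_Hk_term; lia. }
  assert (Hb1 : b 1%nat < c 0%nat).
  { apply pow_lt_pow_l; [split|lia].
    - apply Rlt_le, Rdiv_lt_0_compat; [exact Hs|]. apply lt_0_INR. lia.
    - unfold Rdiv. apply Rmult_lt_compat_l; [exact Hs|].
      apply Rinv_lt_contravar.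
      + apply Rmult_lt_0_compat; apply lt_0_INR; lia.
      + apply lt_INR. lia. }
  change (0 < sigma N r k + series1 (Hk_term 1 r N k)).
  replace (sigma N r k) with (c 0%nat) by (rewrite sigma_eq by exact HN; reflexivity).
  lra.
Qed.

End Hk_positive.

Lemma Hk_pos l r N k :
  (l = 0 \/ l = 1)%nat -> Nat.odd (r + l) = true ->
  (1 <= N)%nat -> (1 <= r)%nat -> (1 <= k)%nat -> (2 * k < N)%nat ->
  0 < Hk l r N k.
Proof.
  intros [-> | ->] Hodd HN Hr Hk1 HkN; apply Nat.odd_spec in Hodd;
    destruct Hodd as [a Ha].
  - apply Hk_pos_even; auto. exists (a + 1)%nat. lia.
  - apply Hk_pos_odd; auto. exists a. lia.
Qed.

Theorem mainTheorem4 (N l r q : nat) :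
  (3 <= N)%nat -> Nat.odd N = true ->
  (l = 0 \/ l = 1)%nat ->
  (1 <= r)%nat -> Nat.odd (r + l) = true ->
  (q <= (N - 1) / 2)%nat ->
  (forall i j : nat, (1 <= i <= N)%nat -> (1 <= j <= N)%nat ->
     ts l r N q j (node l N i) = phi l N q j (node l N i)) /\
  (forall (f : nat -> R) (i : nat), (1 <= i <= N)%nat ->
     Ts l r N q f (node l N i) = Tq l N q f (node l N i)).
Proof.
  intros HN _ Hl Hr Hrl Hq.
  assert (Hq2 : (2 * q < N)%nat).
  { pose proof (Nat.Div0.mul_div_le (N - 1) 2). lia. }
  assert (Hnodes : forall i j : nat, (1 <= i <= N)%nat -> (1 <= j <= N)%nat ->
            ts l r N q j (node l N i) = phi l N q j (node l N i)).
  { intros i j _ _. unfold ts, phi. do 3 f_equal.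
    apply sumR_ext. intros k Hkq.
    rewrite Ck_node by lia.
    assert (0 < Hk l r N k) by (apply Hk_pos; auto; lia).
    field. lra. }
  split; [exact Hnodes|].
  intros f i Hi. unfold Ts, Tq.
  apply sumR_ext. intros j Hj. rewrite Hnodes by assumption. reflexivity.
Qed.
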